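(* Let $\mu\in(0,1)$, $\rho\in[0,1]$, $\nu=\mu^2+\rho\mu(1-\mu)$ and $s=\mu(1-\mu)(1-\rho)$. Let $L_1(\mu,\nu)=\inf_{\pi\in\mathcal M(\mu,\nu)}\int P_1\,d\pi$ and $U_1(\mu,\nu)=\sup_{\pi\in\mathcal M(\mu,\nu)}\int P_1\,d\pi$ with $P_1(q)=3q^2-2q^3$. Then \[ L_1(\mu,\nu)=\nu+2\frac{(\mu-\nu)^2}{1-\mu}=\mu+s\{2\mu(1-\rho)-1\}, \] \[ U_1(\mu,\nu)=3\nu-2\frac{\nu^2}{\mu}=\mu+s\{2\mu+2\rho(1-\mu)-1\}. \] Moreover $U_1(\mu,\nu)-L_1(\mu,\nu)=2\mu(1-\mu)\rho(1-\rho)\le1/8$, and if $\mu>1/2$, then $\int P_1\,d\pi>\mu$ holds for every $\pi\in\mathcal M(\mu,\nu)$ if and only if $\rho<1-1/(2\mu)$.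
   Context: $\mathcal M(\mu,\nu)$ denotes the set of Borel probability measures $\pi$ on $[0,1]$ with $\int q\,d\pi(q)=\mu$ and $\int q^2\,d\pi(q)=\nu$. $P_1(q)=\mathbb{P}\{\mathrm{Bin}(3,q)\ge2\}$ is the three-vote majority success probability. *)

From HB Require Import structures.
From mathcomp Require Import all_boot all_order all_algebra.
From mathcomp Require Import all_classical all_reals all_analysis.
Set Implicit Arguments. Unset Strict Implicit. Unset Printing Implicit Defensive.
Import Order.TTheory GRing.Theory Num.Theory.
Local Open Scope classical_set_scope.
Local Open Scope ring_scope.

(* Three-vote majority success probability P{Bin(3,q) >= 2} = 3q^2 - 2q^3. *)
Definition P1 {R : realType} (q : R) : R := 3 * q ^+ 2 - 2 * q ^+ 3.

(* M(mu,nu): Borel probability measures on [0,1] with first moment mu and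
   second moment nu.  Represented as Borel probability measures on R that
   give full mass to [0,1]. *)
Definition Mset {R : realType} (mu nu : R) : set (probability R R) :=
  [set P : probability R R | P `[(0:R)%R, (1:R)%R]%classic = 1%E /\
           (\int[P]_x (x%:E) = mu%:E)%E /\
           (\int[P]_x ((x ^+ 2)%:E) = nu%:E)%E].

Definition L1 {R : realType} (mu nu : R) : \bar R :=
  ereal_inf [set (\int[P]_x (P1 x)%:E)%E | P in Mset mu nu].

Definition U1 {R : realType} (mu nu : R) : \bar R :=
  ereal_sup [set (\int[P]_x (P1 x)%:E)%E | P in Mset mu nu].

From HB Require Import structures.
From mathcomp Require Import all_boot all_order all_algebra.
From mathcomp Require Import all_classical all_reals all_analysis.
From mathcomp Require Import measurable_realfun ring lra.
Set Implicit Arguments.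
Unset Strict Implicit.
Unset Printing Implicit Defensive.
Import Order.TTheory GRing.Theory Num.Theory.
Local Open Scope classical_set_scope.
Local Open Scope ring_scope.

(* Since P1 q = 3 q^2 - 2 q^3, the integral of P1 against pi is 3 nu - 2 m3,
   where m3 is the third moment, so both extremal problems are about m3.  On
   [0,1] the cubics x (x - b)^2 and (x - a)^2 (1 - x) are nonnegative, which
   bounds m3 linearly in mu and nu; for b = nu/mu and a = (mu - nu)/(1 - mu)
   the bounds are attained by the two-point laws on {0, b} and {a, 1}. *)

Local Notation I01 := `[0%R, 1%R]%classic.

Lemma ereal_inf_attained (R : realType) (S : set (\bar R)) x :
  S x -> lbound S x -> ereal_inf S = x.
Proof.
by move=> Sx lbx; apply/eqP; rewrite eq_le ereal_inf_lbound// le_ereal_inf_tmp.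
Qed.

Lemma ereal_sup_attained (R : realType) (S : set (\bar R)) x :
  S x -> ubound S x -> ereal_sup S = x.
Proof.
by move=> Sx ubx; apply/eqP; rewrite eq_le ge_ereal_sup// ereal_sup_ubound.
Qed.

Section unit_interval_support.
Context (R : realType) (P : probability R R).
Hypothesis P01 : P I01 = 1%E.

Lemma probability_itv01C : P (~` I01) = 0%E.
Proof. by rewrite probability_setC ?P01 ?subee//; exact: measurable_itv. Qed.

Lemma integral_itv01 (f : R -> R) : measurable_fun setT f ->
  (\int[P]_x (f x)%:E = \int[P]_(x in I01) (f x)%:E)%E.
Proof.
move=> mf; have mI : measurable (I01 : set R) by exact: measurable_itv.
rewrite -(setUv I01) integral_setU//; last 3 first.
- exact: measurableC.
- by apply/measurable_EFinP; rewrite setUv.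
- by rewrite /disj_set setICr.
rewrite (@null_set_integral _ _ _ P (~` _)) ?adde0//.
- exact: measurableC.
- by apply/measurable_EFinP; exact: measurable_funTS.
- exact: probability_itv01C.
Qed.

Lemma integrable_itv01_expr n : P.-integrable I01 (EFin \o (fun x => x ^+ n)).
Proof.
apply: measurable_bounded_integrable.
- exact: measurable_itv.
- by apply: (le_lt_trans (probability_le1 P (measurable_itv _))); rewrite ltry.
- exact: exprn_measurable.
exists 1; split; first by rewrite num_real.
move=> M M1 x; rewrite /= in_itv /= => /andP[x0 x1].
by rewrite (le_trans _ (ltW M1))// ger0_norm ?exprn_ge0// exprn_ile1.
Qed.

Definition moment n : R := \int[P]_(x in I01) x ^+ n.

Lemma integral_moment n : (\int[P]_x (x ^+ n)%:E = (moment n)%:E)%E.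
Proof.
rewrite integral_itv01; last exact: exprn_measurable.
by rewrite fineK//; apply: integrable_fin_num; [exact: measurable_itv|exact: integrable_itv01_expr].
Qed.

Let integrable_monomial c n :
  P.-integrable I01 (EFin \o (fun x => c * x ^+ n)).
Proof. exact: (integrableZl (measurable_itv _) c (integrable_itv01_expr n)). Qed.

(* [integrableD] restated so that it applies to [EFin \o (f + g)] by conversion. *)
Let integrable_sum2 (f g : R -> R) :
  P.-integrable I01 (EFin \o f) -> P.-integrable I01 (EFin \o g) ->
  P.-integrable I01 (EFin \o (fun x => f x + g x)).
Proof. exact: integrableD. Qed.

Lemma integrable_cubic c3 c2 c1 c0 :
  P.-integrable I01 (EFin \o (fun x => c3 * x ^+ 3 + c2 * x ^+ 2 + c1 * x + c0)).
Proof.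
apply: integrable_sum2; last exact: finite_measure_integrable_cst (measurable_itv _).
apply: integrable_sum2; last exact: integrable_monomial c1 1.
by apply: integrable_sum2; exact: integrable_monomial.
Qed.

Lemma Rintegral_cubic c3 c2 c1 c0 :
  \int[P]_(x in I01) (c3 * x ^+ 3 + c2 * x ^+ 2 + c1 * x + c0) =
  c3 * moment 3 + c2 * moment 2 + c1 * moment 1 + c0.
Proof.
have mI : measurable (I01 : set R) by exact: measurable_itv.
have icst : P.-integrable I01 (EFin \o cst c0).
  exact: finite_measure_integrable_cst.
rewrite !RintegralD//; last 3 first.
- exact: integrable_sum2.
- exact: integrable_monomial c1 1.
- by apply: integrable_sum2; [exact: integrable_sum2 | exact: integrable_monomial c1 1].
rewrite !RintegralZl//; try exact: integrable_itv01_expr; last first.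
  by apply: (eq_integrable mI _ _ _ (integrable_itv01_expr 1)) => x _; rewrite /= expr1.
by rewrite Rintegral_cst// (_ : fine _ = 1) ?mulr1//; exact: (congr1 fine P01).
Qed.

Lemma measurable_cubic (c3 c2 c1 c0 : R) :
  measurable_fun setT (fun x : R => c3 * x ^+ 3 + c2 * x ^+ 2 + c1 * x + c0).
Proof.
by do 3 apply: measurable_funD => //; apply: measurable_funM => //; exact: exprn_measurable.
Qed.

Lemma integral_cubic c3 c2 c1 c0 :
  (\int[P]_x (c3 * x ^+ 3 + c2 * x ^+ 2 + c1 * x + c0)%:E =
   (c3 * moment 3 + c2 * moment 2 + c1 * moment 1 + c0)%:E)%E.
Proof.
rewrite -Rintegral_cubic integral_itv01; last exact: measurable_cubic.
rewrite fineK//.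
by apply: integrable_fin_num; [exact: measurable_itv | exact: integrable_cubic].
Qed.

Lemma cubic_moments_ge0 c3 c2 c1 c0 :
  (forall x, 0 <= x <= 1 -> 0 <= c3 * x ^+ 3 + c2 * x ^+ 2 + c1 * x + c0) ->
  0 <= c3 * moment 3 + c2 * moment 2 + c1 * moment 1 + c0.
Proof.
move=> cubic_ge0; rewrite -lee_fin -integral_cubic integral_itv01; last exact: measurable_cubic.
by apply: integral_ge0 => x; rewrite /= in_itv /= lee_fin; exact: cubic_ge0.
Qed.

End unit_interval_support.

Section moment_constraints.
Context (R : realType) (mu nu : R) (P : probability R R).
Hypothesis PM : Mset mu nu P.

Let P01 : P I01 = 1%E. Proof. by case: PM. Qed.

Lemma Mset_moment1 : moment P 1 = mu.
Proof.
by case: PM => _ [+ _]; rewrite [X in X = _ -> _](integral_moment P01 1) => -[].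
Qed.

Lemma Mset_moment2 : moment P 2 = nu.
Proof. by case: PM => _ [_]; rewrite (integral_moment P01 2) => -[]. Qed.

Lemma Mset_integral_P1 :
  (\int[P]_x (P1 x)%:E = (3 * nu - 2 * moment P 3)%:E)%E.
Proof.
rewrite (eq_integral (fun x : R => (-2 * x ^+ 3 + 3 * x ^+ 2 + 0 * x + 0)%:E)).
  by rewrite integral_cubic// Mset_moment2; congr EFin; ring.
by move=> x _; rewrite /P1; congr EFin; ring.
Qed.

Lemma Mset_moment3_ge b : 2 * b * nu - b ^+ 2 * mu <= moment P 3.
Proof.
have /(cubic_moments_ge0 P01) :
    forall x, 0 <= x <= 1 -> 0 <= 1 * x ^+ 3 + - (2 * b) * x ^+ 2 + b ^+ 2 * x + 0.
  move=> x /andP[x0 _]; rewrite (_ : _ + _ = x * (x - b) ^+ 2); last by ring.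
  by rewrite mulr_ge0// sqr_ge0.
rewrite Mset_moment1 Mset_moment2; lra.
Qed.

Lemma Mset_moment3_le a :
  moment P 3 <= (1 + 2 * a) * nu - (2 * a + a ^+ 2) * mu + a ^+ 2.
Proof.
have /(cubic_moments_ge0 P01) : forall x, 0 <= x <= 1 ->
    0 <= -1 * x ^+ 3 + (1 + 2 * a) * x ^+ 2 + - (2 * a + a ^+ 2) * x + a ^+ 2.
  move=> x /andP[_ x1]; rewrite (_ : _ + _ = (x - a) ^+ 2 * (1 - x)); last by ring.
  by rewrite mulr_ge0 ?sqr_ge0 ?subr_ge0.
rewrite Mset_moment1 Mset_moment2; lra.
Qed.

End moment_constraints.

Definition L1_value (R : realType) (mu nu : R) := nu + 2 * (mu - nu) ^+ 2 / (1 - mu).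

Definition U1_value (R : realType) (mu nu : R) := 3 * nu - 2 * nu ^+ 2 / mu.

Section P1_bounds.
Context (R : realType) (mu nu : R) (P : probability R R).
Hypothesis PM : Mset mu nu P.

Lemma Mset_P1_ge : mu < 1 -> ((L1_value mu nu)%:E <= \int[P]_x (P1 x)%:E)%E.
Proof.
move=> mu1; rewrite (Mset_integral_P1 PM) lee_fin.
pose a := (mu - nu) / (1 - mu).
have -> : L1_value mu nu = 3 * nu - 2 * ((1 + 2 * a) * nu - (2 * a + a ^+ 2) * mu + a ^+ 2).
  by rewrite /L1_value /a; field; rewrite subr_eq0 gt_eqF.
by have := Mset_moment3_le PM a; lra.
Qed.

Lemma Mset_P1_le : 0 < mu -> (\int[P]_x (P1 x)%:E <= (U1_value mu nu)%:E)%E.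
Proof.
move=> mu0; rewrite (Mset_integral_P1 PM) lee_fin.
pose b := nu / mu.
have -> : U1_value mu nu = 3 * nu - 2 * (2 * b * nu - b ^+ 2 * mu).
  by rewrite /U1_value /b; field; rewrite gt_eqF.
by have := Mset_moment3_ge PM b; lra.
Qed.

End P1_bounds.

Section two_point.
Context (R : realType) (u v w : R) (w0 : 0 <= w) (w1 : 0 <= 1 - w).

Definition two_point : set R -> \bar R :=
  measure_add (mscale (NngNum w0) \d_u) (mscale (NngNum w1) \d_v).

Let two_point0 : two_point set0 = 0%E. Proof. exact: measure0. Qed.
Let two_point_ge0 A : (0 <= two_point A)%E. Proof. exact: measure_ge0. Qed.
Let two_point_sigma_additive : semi_sigma_additive two_point.
Proof. exact: measure_semi_sigma_additive. Qed.
HB.instance Definition _ := isMeasure.Build _ _ _ two_point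
  two_point0 two_point_ge0 two_point_sigma_additive.

Lemma two_pointE A : two_point A = (w%:E * \d_u A + (1 - w)%:E * \d_v A)%E.
Proof. by rewrite /two_point measure_addE. Qed.

Let two_pointT : two_point setT = 1%E.
Proof. by rewrite two_pointE !diracT !mule1 -EFinD addrC subrK. Qed.
HB.instance Definition _ := Measure_isProbability.Build _ _ _ two_point two_pointT.

Hypotheses (u01 : 0 <= u <= 1) (v01 : 0 <= v <= 1).

Lemma two_point_itv01 : two_point I01 = 1%E.
Proof.
rewrite two_pointE !diracE !mem_set ?in_itv//= !mule1 -EFinD.
by rewrite addrC subrK.
Qed.

Lemma integral_two_point (f : R -> R) : measurable_fun setT f ->
  (forall x, 0 <= x <= 1 -> 0 <= f x) ->
  (\int[two_point]_x (f x)%:E = (w * f u + (1 - w) * f v)%:E)%E.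
Proof.
move=> mf f0; have mI : measurable (I01 : set R) by exact: measurable_itv.
have mfI : measurable_fun (I01 : set R) (fun x => (f x)%:E).
  by apply/measurable_EFinP; exact: measurable_funTS.
have f0I x : I01 x -> (0 <= (f x)%:E)%E by rewrite /= in_itv /= lee_fin; exact: f0.
rewrite (integral_itv01 two_point_itv01 mf) ge0_integral_measure_add//.
rewrite !ge0_integral_mscale//.
by rewrite !integral_dirac// !diracE !mem_set ?in_itv//= !mul1e -!EFinM -EFinD.
Qed.

Lemma Mset_two_point :
  Mset (w * u + (1 - w) * v) (w * u ^+ 2 + (1 - w) * v ^+ 2) two_point.
Proof.
split; first exact: two_point_itv01.
split; first by apply: integral_two_point => [|x /andP[]//]; exact: measurable_id.
apply: integral_two_point => [|x _]; [exact: exprn_measurable | exact: sqr_ge0].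
Qed.

Lemma integral_two_point_P1 :
  (\int[two_point]_x (P1 x)%:E = (w * P1 u + (1 - w) * P1 v)%:E)%E.
Proof.
apply: integral_two_point => [|x /andP[x0 x1]].
  by apply: measurable_funB; apply: measurable_funM => //; exact: exprn_measurable.
rewrite /P1 (_ : _ - _ = x ^+ 2 * (3 - 2 * x)); last by ring.
by rewrite mulr_ge0 ?sqr_ge0//; lra.
Qed.

End two_point.

Section extremal_measures.
Context (R : realType) (mu nu : R).

Lemma Mset_P1_L1_attained : 0 < mu < 1 -> mu ^+ 2 <= nu <= mu ->
  exists2 P, Mset mu nu P & (\int[P]_x (P1 x)%:E = (L1_value mu nu)%:E)%E.
Proof.
move=> /andP[mu0 mu1] /andP[nu_ge nu_le].
pose a := (mu - nu) / (1 - mu); pose w := (mu - a) / (1 - a).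
have a0 : 0 <= a by apply: divr_ge0; lra.
have a_le : a <= mu by rewrite ler_pdivrMr ?subr_gt0//; nra.
have w0 : 0 <= w by apply: divr_ge0; lra.
have w1 : 0 <= 1 - w by rewrite subr_ge0 ler_pdivrMr ?subr_gt0; lra.
have mu1' : 1 - mu != 0 by rewrite subr_eq0 gt_eqF.
have den : 1 - mu - (mu - nu) != 0.
  have : 0 < (1 - mu) ^+ 2 by rewrite exprn_gt0// subr_gt0.
  by rewrite gt_eqF//; nra.
have u01 : 0 <= (1 : R) <= 1 by rewrite ler01 lexx.
have a01 : 0 <= a <= 1 by apply/andP; split; lra.
exists (two_point 1 a w0 w1).
  have -> : mu = w * 1 + (1 - w) * a by rewrite /w /a; field; rewrite mu1' den.
  have -> : nu = w * 1 ^+ 2 + (1 - w) * a ^+ 2.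
    by rewrite /w /a; field; rewrite mu1' den.
  exact: Mset_two_point.
rewrite integral_two_point_P1//; congr EFin.
by rewrite /P1 /L1_value /w /a; field; rewrite mu1' den.
Qed.

Lemma Mset_P1_U1_attained : 0 < mu -> mu ^+ 2 <= nu <= mu ->
  exists2 P, Mset mu nu P & (\int[P]_x (P1 x)%:E = (U1_value mu nu)%:E)%E.
Proof.
move=> mu0 /andP[nu_ge nu_le].
have nu0 : 0 < nu by apply: lt_le_trans nu_ge; rewrite exprn_gt0.
pose b := nu / mu; pose w := mu / b.
have b0 : 0 < b by rewrite divr_gt0.
have b01 : 0 <= b <= 1 by rewrite ltW//= ler_pdivrMr// mul1r.
have w0 : 0 <= w by rewrite divr_ge0// ltW.
have w1 : 0 <= 1 - w.
  by rewrite subr_ge0 ler_pdivrMr// mul1r ler_pdivlMr// -expr2.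
have v01 : 0 <= (0 : R) <= 1 by rewrite lexx ler01.
have mu0' : mu != 0 by rewrite gt_eqF.
have nu0' : nu != 0 by rewrite gt_eqF.
exists (two_point b 0 w0 w1).
  have -> : mu = w * b + (1 - w) * 0 by rewrite /w /b; field; rewrite mu0' nu0'.
  have -> : nu = w * b ^+ 2 + (1 - w) * 0 ^+ 2.
    by rewrite /w /b; field; rewrite mu0' nu0'.
  exact: Mset_two_point.
rewrite integral_two_point_P1//; congr EFin.
by rewrite /P1 /U1_value /w /b; field; rewrite mu0' nu0'.
Qed.

End extremal_measures.

Lemma L1E (R : realType) (mu nu : R) : 0 < mu < 1 -> mu ^+ 2 <= nu <= mu ->
  L1 mu nu = (L1_value mu nu)%:E.
Proof.
move=> /[dup] /andP[_ mu1] mu01 nu_range.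
have [P PM PL] := Mset_P1_L1_attained mu01 nu_range.
apply: ereal_inf_attained; first by exists P.
by move=> _ [Q QM <-]; exact: Mset_P1_ge.
Qed.

Lemma U1E (R : realType) (mu nu : R) : 0 < mu -> mu ^+ 2 <= nu <= mu ->
  U1 mu nu = (U1_value mu nu)%:E.
Proof.
move=> mu0 nu_range.
have [P PM PU] := Mset_P1_U1_attained mu0 nu_range.
apply: ereal_sup_attained; first by exists P.
by move=> _ [Q QM <-]; exact: Mset_P1_le.
Qed.

Lemma Mset_P1_gt_iff (R : realType) (mu nu t : R) :
  0 < mu < 1 -> mu ^+ 2 <= nu <= mu ->
  (forall P : probability R R, P \in Mset mu nu -> (t%:E < \int[P]_x (P1 x)%:E)%E)
  <-> t < L1_value mu nu.
Proof.
move=> /[dup] /andP[_ mu1] mu01 nu_range; split.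
  have [P PM PL] := Mset_P1_L1_attained mu01 nu_range.
  by move=> /(_ P (mem_set PM)); rewrite PL lte_fin.
move=> tL P /set_mem PM; apply: lt_le_trans (Mset_P1_ge PM mu1).
by rewrite lte_fin.
Qed.

Lemma mul_onem_le_quarter (R : realFieldType) (x : R) : x * (1 - x) <= 1 / 4.
Proof. have := sqr_ge0 (2 * x - 1); rewrite expr2; lra. Qed.

Theorem theorem2 (R : realType) (mu rho : R) :
  0 < mu < 1 -> 0 <= rho <= 1 ->
  let nu := mu ^+ 2 + rho * mu * (1 - mu) in
  let s := mu * (1 - mu) * (1 - rho) in
  (L1 mu nu = (nu + 2 * (mu - nu) ^+ 2 / (1 - mu))%:E /\
   nu + 2 * (mu - nu) ^+ 2 / (1 - mu) = mu + s * (2 * mu * (1 - rho) - 1)) /\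
  (U1 mu nu = (3 * nu - 2 * nu ^+ 2 / mu)%:E /\
   3 * nu - 2 * nu ^+ 2 / mu = mu + s * (2 * mu + 2 * rho * (1 - mu) - 1)) /\
  ((U1 mu nu - L1 mu nu)%E = (2 * mu * (1 - mu) * rho * (1 - rho))%:E /\
   2 * mu * (1 - mu) * rho * (1 - rho) <= 1 / 8) /\
  (1 / 2 < mu ->
          ((forall P : probability R R, P \in Mset mu nu ->
              (mu%:E < \int[P]_x (P1 x)%:E)%E)
           <-> rho < 1 - 1 / (2 * mu))).
Proof.
move=> /[dup] /andP[mu0 mu1] mu01 /andP[rho0 rho1] nu s.
have var0 : 0 <= mu * (1 - mu) by rewrite mulr_ge0 ?subr_ge0 ?ltW.
have nu_range : mu ^+ 2 <= nu <= mu by apply/andP; split; rewrite /nu; nra.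
have mu0' : mu != 0 by rewrite gt_eqF.
have mu1' : 1 - mu != 0 by rewrite subr_eq0 gt_eqF.
have L1_valueE : L1_value mu nu = mu + s * (2 * mu * (1 - rho) - 1).
  by rewrite /L1_value /nu /s; field.
have U1_valueE : U1_value mu nu = mu + s * (2 * mu + 2 * rho * (1 - mu) - 1).
  by rewrite /U1_value /nu /s; field.
split; first by rewrite L1E.
split; first by rewrite U1E.
split.
  rewrite L1E// U1E// -EFinB L1_valueE U1_valueE /s; split; first by congr EFin; ring.
  have := mul_onem_le_quarter mu; have := mul_onem_le_quarter rho.
  have : 0 <= rho * (1 - rho) by rewrite mulr_ge0 ?subr_ge0.
  nra.
move=> mu_half; rewrite Mset_P1_gt_iff// L1_valueE.
have -> : rho < 1 - 1 / (2 * mu) <-> 0 < 2 * mu * (1 - rho) - 1.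
  rewrite -subr_gt0 (_ : _ - rho = (2 * mu * (1 - rho) - 1) / (2 * mu)); last by field.
  by rewrite pmulr_lgt0// invr_gt0 mulr_gt0.
rewrite -subr_gt0 addrAC subrr add0r; split=> [sk_gt0|k_gt0].
  have s0 : 0 <= s by rewrite /s mulr_ge0// subr_ge0.
  nra.
have rho1' : 0 < 1 - rho by nra.
by rewrite mulr_gt0// /s !mulr_gt0// subr_gt0.
Qed.
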